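(* Let $n\ge 0$ and $0\le k\le n$ be integers of the same parity (both even or both odd). Then $$\max_{x\in[-1,1]}|T_{n;\ge k}(x)|=|T_{n;\ge k}(0)|=|t_{n,k}|,$$ and consequently this maximum is at most $(n+k)^k/k!$.
   Context: For an integer $n\ge 0$, $T_n$ denotes the Chebyshev polynomial of the first kind, i.e. the polynomial with $T_n(\cos\theta)=\cos(n\theta)$ for all real $\theta$; write $T_n(x)=\sum_{j=0}^n t_{n,j}x^j$. For $0\le k\le n$ define the constituent polynomial $T_{n;\ge k}(x):=\sum_{j=k}^{n}t_{n,j}x^{j-k}$, so that $T_n(x)=\sum_{j=0}^{k-1}t_{n,j}x^j+x^kT_{n;\ge k}(x)$. *)

From HB Require Import structures.
From mathcomp Require Import all_boot all_order all_algebra.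
From mathcomp Require Import all_classical all_reals all_analysis.
From mathcomp Require Import ring.
Set Implicit Arguments. Unset Strict Implicit. Unset Printing Implicit Defensive.
Import Order.TTheory GRing.Theory Num.Theory.
Local Open Scope ring_scope.

Fixpoint cheb_pair (R : nzRingType) (n : nat) : {poly R} * {poly R} :=
  match n with
  | 0 => (1, 'X)
  | m.+1 => let: (a, b) := cheb_pair R m in (b, 2%:R *: 'X * b - a)
  end.

Definition cheb (R : nzRingType) (n : nat) : {poly R} := (cheb_pair R n).1.

(* The constituent polynomial T_{n; >= k}(x) = sum_{j=k}^n t_{n,j} x^{j-k}. *)
Definition cheb_ge (R : nzRingType) (n k : nat) : {poly R} :=
  \poly_(i < (n.+1 - k)%N) (cheb R n)`_(i + k).

Lemma cheb0 (R : nzRingType) : cheb R 0 = 1. Proof. by []. Qed.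
Lemma cheb1 (R : nzRingType) : cheb R 1 = 'X. Proof. by []. Qed.
Lemma chebSS (R : nzRingType) n :
  cheb R n.+2 = 2%:R *: 'X * cheb R n.+1 - cheb R n.
Proof.
rewrite /cheb /=; case: (cheb_pair R n) => a b /=. by [].
Qed.

Lemma cheb_cos (R : realType) (n : nat) (t : R) :
  (cheb R n).[cos t] = cos (n%:R * t).
Proof.
have H : forall m, (cheb R m).[cos t] = cos (m%:R * t) /\
                   (cheb R m.+1).[cos t] = cos (m.+1%:R * t).
  elim=> [|m [IH1 IH2]]; first by rewrite cheb0 cheb1 !hornerE cos0.
  split=> //; rewrite chebSS !hornerE IH1 IH2.
  have E2 : m.+2%:R * t = m.+1%:R * t + t by rewrite -[m.+2]addn1 natrD; ring.
  have E0 : m%:R * t = m.+1%:R * t - t by rewrite -[m.+1]addn1 natrD; ring.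
  rewrite E2 E0 cosB cosD; ring.
by case: (H n).
Qed.

From mathcomp Require Import all_boot all_order all_algebra.
From mathcomp Require Import all_classical all_reals all_analysis.
From mathcomp Require Import ring lra zify.
Set Implicit Arguments. Unset Strict Implicit. Unset Printing Implicit Defensive.
Import Order.TTheory GRing.Theory Num.Theory.
Local Open Scope ring_scope.

(* The recurrence T_{n+2} = 2 X T_{n+1} - T_n passes to the constituents as
   T_{n+2;>=k+1} = 2 T_{n+1;>=k} - T_{n;>=k+1}, and the signs of the
   constant terms t_{n,k} alternate in such a way that, after multiplying by
   the sign s_{n,k} = (-1)^((n-k)/2), this reads
   s T_{n+2;>=k+1} = 2 (s T_{n+1;>=k}) + (s T_{n;>=k+1}): a nonnegative
   combination.  Polynomials p with |p(x)| <= p(0) on [-1,1] form a convex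
   cone containing s_{n,0} T_n = T_n(0) T_n (n even), so by induction every
   s_{n,k} T_{n;>=k} lies in it.  The same recurrence on coefficients,
   |t_{n+2,k+1}| <= 2 |t_{n+1,k}| + |t_{n,k+1}|, gives the bound
   (n+k)^k/k! by induction, using (N+2)^(k+1) >= N^(k+1) + 2(k+1) N^k. *)

Lemma cheb_coef_ind (P : nat -> nat -> Prop) :
  (forall n, P n 0) -> (forall k, P 0 k.+1) -> (forall k, P 1 k.+1) ->
  (forall n k, P n.+1 k -> P n k.+1 -> P n.+2 k.+1) ->
  forall n k, P n k.
Proof.
move=> Pn0 P0k P1k PSS n; elim/ltn_ind: n => -[|[|n]] IH [|k] //.
by apply: PSS; apply: IH.
Qed.

Lemma expS2_lower_bound (N k : nat) :
  (2 * k.+1 * N ^ k + N ^ k.+1 <= N.+2 ^ k.+1)%N.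
Proof.
elim: k => [|k IH]; first by rewrite !expn0 !expn1; lia.
have := leq_mul (leqnn N.+2) IH.
rewrite [(N.+2 ^ k.+2)%N]expnS [(N ^ k.+2)%N]expnS [(N ^ k.+1)%N]expnS.
move: (N ^ k)%N (N.+2 ^ k.+1)%N => p q; nia.
Qed.

Section ChebyshevConstituents.
Variable R : realType.
Local Notation T := (cheb R).
Local Notation Tge := (cheb_ge R).

Lemma coef_chebSS n j : (T n.+2)`_j.+1 = 2 * (T n.+1)`_j - (T n)`_j.+1.
Proof. by rewrite chebSS coefB -scalerAl coefZ coefXM. Qed.

Lemma size_cheb_le n : (size (T n) <= n.+1)%N.
Proof.
elim/ltn_ind: n => -[|[|n]] IH; first by rewrite cheb0 size_poly1.
  by rewrite cheb1 size_polyX.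
rewrite chebSS (leq_trans (size_polyD _ _)) // geq_max size_polyN.
apply/andP; split; last exact: leq_trans (IH n (ltnW (ltnSn _))) (leqW (leqnSn _)).
have size2X : (size (2%:R *: 'X : {poly R}) <= 2)%N.
  by rewrite (leq_trans (size_scale_leq _ _)) // size_polyX.
rewrite (leq_trans (size_polyMleq _ _)) // -subn1 leq_subLR.
exact: leq_add size2X (IH n.+1 _).
Qed.

Lemma coef_cheb_gt n j : (n < j)%N -> (T n)`_j = 0.
Proof. by move=> ltnj; rewrite nth_default // (leq_trans (size_cheb_le n)). Qed.

Lemma coef_cheb_ge n k i : (Tge n k)`_i = (T n)`_(i + k).
Proof.
rewrite /cheb_ge coef_poly; case: ltnP => // le_i.
by rewrite coef_cheb_gt //; lia.
Qed.

Lemma cheb_ge0 n : Tge n 0 = T n.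
Proof. by apply/polyP => i; rewrite coef_cheb_ge addn0. Qed.

Lemma cheb_ge_gt n k : (n < k)%N -> Tge n k = 0.
Proof.
by move=> ltnk; apply/polyP => i; rewrite coef_cheb_ge coef0 coef_cheb_gt //; lia.
Qed.

Lemma cheb_ge11 : Tge 1 1 = 1.
Proof. by apply/polyP => i; rewrite coef_cheb_ge cheb1 coefX coef1 addn1. Qed.

Lemma cheb_geSS n k : Tge n.+2 k.+1 = 2%:R *: Tge n.+1 k - Tge n k.+1.
Proof.
by apply/polyP => i; rewrite coefB coefZ !coef_cheb_ge !addnS coef_chebSS.
Qed.

Lemma cheb_ge_horner0 n k : (Tge n k).[0] = (T n)`_k.
Proof. by rewrite horner_coef0 coef_cheb_ge. Qed.

Lemma cheb_horner0 n : (T n).[0] = if odd n then 0 else (-1) ^+ n./2.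
Proof.
elim/ltn_ind: n => -[|[|n]] IH; rewrite ?cheb0 ?cheb1 ?hornerE //.
rewrite chebSS !hornerE IH //=.
by case: (odd n); rewrite /= ?exprS; ring.
Qed.

Lemma norm_cheb_le1 n x : -1 <= x <= 1 -> `|(T n).[x]| <= 1.
Proof. by move=> /acos_def [_ <-]; rewrite cheb_cos cos_max. Qed.

Definition peak0 (p : {poly R}) := forall x, -1 <= x <= 1 -> `|p.[x]| <= p.[0].

Lemma peak0_0 : peak0 0.
Proof. by move=> x _; rewrite !horner0 normr0. Qed.

Lemma peak0_1 : peak0 1.
Proof. by move=> x _; rewrite !hornerC normr1. Qed.

Lemma peak0D p q : peak0 p -> peak0 q -> peak0 (p + q).
Proof.
move=> pp pq x x11; rewrite !hornerD.
by rewrite (le_trans (ler_normD _ _)) // lerD ?pp ?pq.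
Qed.

Lemma peak0Z c p : 0 <= c -> peak0 p -> peak0 (c *: p).
Proof.
by move=> c0 pp x x11; rewrite !hornerZ normrM ger0_norm // ler_wpM2l ?pp.
Qed.

Lemma peak0_norm p x : peak0 p -> -1 <= x <= 1 -> `|p.[x]| <= `|p.[0]|.
Proof. by move=> pp x11; rewrite (le_trans (pp x x11)) ?ler_norm. Qed.

Lemma peak0_cheb_even n : ~~ odd n -> peak0 ((-1) ^+ n./2 *: T n).
Proof.
move=> evn x x11; rewrite !hornerZ cheb_horner0 (negbTE evn) -expr2 sqrr_sign.
by rewrite normrM normrX normrN1 expr1n mul1r norm_cheb_le1.
Qed.

Definition cheb_ge_sign n k : R := (-1) ^+ (n - k)./2.

Lemma peak0_cheb_geSS n k :
  peak0 (cheb_ge_sign n.+1 k *: Tge n.+1 k) ->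
  peak0 (cheb_ge_sign n k.+1 *: Tge n k.+1) ->
  peak0 (cheb_ge_sign n.+2 k.+1 *: Tge n.+2 k.+1).
Proof.
move=> p1 p2; have [lekn | ltnk] := leqP k.+1 n; last first.
  rewrite cheb_geSS (cheb_ge_gt ltnk) subr0 scalerA mulrC -scalerA.
  by rewrite /cheb_ge_sign subSS; apply: peak0Z.
have signS : cheb_ge_sign n.+1 k = - cheb_ge_sign n k.+1.
  rewrite /cheb_ge_sign (_ : (n.+1 - k = (n - k.+1).+2)%N); last by lia.
  by rewrite /= exprS mulN1r.
rewrite /cheb_ge_sign subSS -/(cheb_ge_sign n.+1 k) cheb_geSS scalerBr.
rewrite scalerA mulrC -scalerA {2}signS scaleNr opprK.
by apply: peak0D => //; apply: peak0Z.
Qed.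

Lemma peak0_cheb_ge n k :
  odd n = odd k -> peak0 (cheb_ge_sign n k *: Tge n k).
Proof.
elim/cheb_coef_ind: n / k => [n | k | [|k] | n k IH1 IH2] /= parity.
- by rewrite cheb_ge0 /cheb_ge_sign subn0; apply: peak0_cheb_even; rewrite parity.
- by rewrite cheb_ge_gt // scaler0; apply: peak0_0.
- by rewrite cheb_ge11 /cheb_ge_sign subnn scale1r; apply: peak0_1.
- by rewrite cheb_ge_gt // scaler0; apply: peak0_0.
- move: parity; rewrite negbK => parity.
  by apply: peak0_cheb_geSS; [apply: IH1; rewrite /= parity negbK | apply: IH2].
Qed.

Lemma norm_cheb_ge_le n k x : odd n = odd k -> -1 <= x <= 1 ->
  `|(Tge n k).[x]| <= `|(Tge n k).[0]|.
Proof.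
move=> parity x11; have := peak0_norm (peak0_cheb_ge parity) x11.
by rewrite !hornerZ !normrM /cheb_ge_sign normrX normrN1 expr1n !mul1r.
Qed.

Lemma coef_bound_step (N k : nat) :
  2 * ((N ^ k)%:R / (k`!)%:R) + (N ^ k.+1)%:R / (k.+1`!)%:R
    <= ((N.+2) ^ k.+1)%:R / (k.+1`!)%:R :> R.
Proof.
have fact_neq0 : (k`!)%:R != 0 :> R by rewrite pnatr_eq0 -lt0n fact_gt0.
have -> : 2 * ((N ^ k)%:R / (k`!)%:R)
          = ((2 * k.+1 * N ^ k)%N)%:R / (k.+1`!)%:R :> R.
  rewrite factS !natrM; field; rewrite fact_neq0 /=.
  by apply/negP => /eqP; have := ler0n R k; lra.
rewrite -mulrDl -natrD ler_wpM2r ?invr_ge0 ?ler0n //.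
by rewrite ler_nat expS2_lower_bound.
Qed.

Lemma norm_coef_cheb_le n k :
  `|(T n)`_k| <= ((n + k) ^ k)%:R / (k`!)%:R.
Proof.
elim/cheb_coef_ind: n / k => [n | k | [|k] | n k IH1 IH2].
- rewrite expn0 fact0 divr1 -horner_coef0 norm_cheb_le1 //.
  by rewrite lerN10 ler01.
- by rewrite cheb0 coef1 normr0 divr_ge0 ?ler0n.
- by rewrite cheb1 coefX normr1 divr1 ler1n.
- by rewrite cheb1 coefX normr0 divr_ge0 ?ler0n.
- rewrite !addSn addnS in IH1 IH2 *.
  apply: le_trans (coef_bound_step _ _); rewrite coef_chebSS.
  rewrite (le_trans (ler_normB _ _)) // normrM ger0_norm ?ler0n //.
  by rewrite lerD // ler_wpM2l.
Qed.

End ChebyshevConstituents.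

Theorem mainTheorem4 (R : realType) (n k : nat) :
  (k <= n)%N -> odd n = odd k ->
  (forall x : R, -1 <= x <= 1 -> `|(cheb_ge R n k).[x]| <= `|(cheb_ge R n k).[0]|)
  /\ `|(cheb_ge R n k).[0]| = `|(cheb R n)`_k|
  /\ `|(cheb R n)`_k| <= ((n + k) ^ k)%:R / (k`!)%:R.
Proof.
move=> _ parity; split; last split.
- by move=> x; apply: norm_cheb_ge_le.
- by rewrite cheb_ge_horner0.
- exact: norm_coef_cheb_le.
Qed.
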